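(* Let $q$ be an even positive integer and $h_q(x_1,\dots,x_d):=\sum_{\mathbf{k}\in\mathbb{Z}_{\ge0}^d,\ \|\mathbf{k}\|_1=q}x_1^{k_1}\cdots x_d^{k_d}$ the complete homogeneous symmetric polynomial of degree $q$ in $d$ variables. In each of the cases (a) $q=2$, (b) $d=2$, (c) $d=3$ and $q=4$, we have for all $(x_1,\dots,x_d)\in\mathbb{R}^d$ $$h_q(x_1,\dots,x_d)\ge\frac12\sum_{j=1}^d x_j^q.$$ *)

From mathcomp Require Import all_boot all_order all_algebra.
From mathcomp Require Import reals.
Set Implicit Arguments. Unset Strict Implicit. Unset Printing Implicit Defensive.
Import Order.TTheory GRing.Theory Num.Theory.
Local Open Scope ring_scope.

(* Multi-indices k in Z_{>=0}^d with |k|_1 = q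
   are enumerated as finite functions 'I_d -> 'I_q.+1 (each k_j <= q). *)
Definition hq (R : ringType) (d q : nat) (x : 'I_d -> R) : R :=
  \sum_(k : {ffun 'I_d -> 'I_q.+1} | (\sum_(j < d) (k j : nat))%N == q)
     \prod_(j < d) x j ^+ (k j : nat).

From mathcomp Require Import all_boot all_order all_algebra.
From mathcomp Require Import reals ring lra.
Set Implicit Arguments. Unset Strict Implicit. Unset Printing Implicit Defensive.
Import Order.TTheory GRing.Theory Num.Theory.
Local Open Scope ring_scope.

(* In each case [2 h_q(x) - \sum_j x_j^q] is a square times a nonnegative
   factor.  Expanding along the first variable,
   [h_n(x_1, ..., x_d) = \sum_i x_1^i h_(n-i)(x_2, ..., x_d)], gives
   - for [q = 2]: [2 h_2(x) - \sum_j x_j^2 = (\sum_j x_j)^2];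
   - for [d = 2], [q = 2m+2]: [2 h_q(a, b) - a^q - b^q = (a+b)^2 h_m(a^2, b^2)],
     and [h_m(a^2, b^2)] is a sum of even powers;
   - for [d = 3], [q = 4]:
     [2 h_4(x) - \sum_j x_j^4 = (\sum_j x_j)^2 \sum_j x_j^2]. *)

Section CompleteHomogeneous.
Variable R : nzRingType.

(* [hq q] is [hsum_lt q.+1 q]; as soon as [n < B] the bound [B] on the
   exponents is irrelevant, and all lemmas below assume it. *)
Definition hsum_lt (B d n : nat) (x : 'I_d -> R) : R :=
  \sum_(k : {ffun 'I_d -> 'I_B} | (\sum_(j < d) (k j : nat))%N == n)
     \prod_(j < d) x j ^+ (k j : nat).

Definition ffun_cons d T (p : T * {ffun 'I_d -> T}) : {ffun 'I_d.+1 -> T} :=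
  [ffun j => if unlift ord0 j is Some j' then p.2 j' else p.1].

Definition ffun_uncons d T (k : {ffun 'I_d.+1 -> T}) : T * {ffun 'I_d -> T} :=
  (k ord0, [ffun j => k (lift ord0 j)]).

Lemma ffun_cons0 d T p : @ffun_cons d T p ord0 = p.1.
Proof. by rewrite ffunE unlift_none. Qed.

Lemma ffun_consS d T p j : @ffun_cons d T p (lift ord0 j) = p.2 j.
Proof. by rewrite ffunE liftK. Qed.

Lemma ffun_consK d T : cancel (@ffun_cons d T) (@ffun_uncons d T).
Proof.
by case=> a f; rewrite /ffun_uncons ffun_cons0; congr pair; apply/ffunP=> j;
  rewrite ffunE ffun_consS.
Qed.

Lemma ffun_unconsK d T : cancel (@ffun_uncons d T) (@ffun_cons d T).
Proof.
by move=> k; apply/ffunP=> j; rewrite ffunE; case: unliftP => [j'|] -> /=;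
  rewrite ?ffunE.
Qed.

Lemma hsum_lt_recl B d n (x : 'I_d.+1 -> R) : (n < B)%N ->
  hsum_lt B n x =
  \sum_(i < n.+1) x ord0 ^+ i * hsum_lt B (n - i) (fun j => x (lift ord0 j)).
Proof.
move=> ltnB; rewrite /hsum_lt (reindex (@ffun_cons d 'I_B)); last first.
  exact/onW_bij/(Bijective (@ffun_consK d 'I_B) (@ffun_unconsK d 'I_B)).
set F := fun i : nat =>
  x ord0 ^+ i * hsum_lt B (n - i) (fun j => x (lift ord0 j)).
rewrite (big_ord_widen B F ltnB) {}/F.
under [RHS]eq_bigr do rewrite mulr_sumr.
rewrite pair_big_dep /=; apply: eq_big => [[a f]|[a f] _] /=.
  rewrite big_ord_recl ffun_cons0.
  under [X in (_ + X)%N]eq_bigr do rewrite ffun_consS.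
  apply/idP/andP => [/eqP <-|[le_an /eqP ->]]; last by rewrite subnKC.
  by rewrite ltnS leq_addr addKn.
rewrite big_ord_recl ffun_cons0; congr (_ * _).
by apply: eq_bigr => j _; rewrite ffun_consS.
Qed.

Lemma hsum_lt0 B n (x : 'I_0 -> R) : (0 < B)%N -> hsum_lt B n x = (n == 0%N)%:R.
Proof.
move=> B_gt0; rewrite /hsum_lt.
under eq_bigl do rewrite big_ord0.
under eq_bigr do rewrite big_ord0.
case: n => [|n] /=; last by rewrite big_pred0.
by rewrite sumr_const card_ffun (card_ord 0) expn0.
Qed.

Lemma hsum_lt1 B n (x : 'I_1 -> R) : (n < B)%N -> hsum_lt B n x = x ord0 ^+ n.
Proof.
move=> ltnB; rewrite hsum_lt_recl // big_ord_recr /= big1 ?add0r => [|i _].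
  by rewrite subnn hsum_lt0 ?mulr1 // (leq_ltn_trans _ ltnB).
by rewrite hsum_lt0 ?(leq_ltn_trans _ ltnB) // subn_eq0 leqNgt ltn_ord mulr0.
Qed.

Lemma hsum_lt_deg0 B d (x : 'I_d -> R) : (0 < B)%N -> hsum_lt B 0 x = 1.
Proof.
move=> B_gt0; elim: d x => [|d IHd] x; first by rewrite hsum_lt0.
by rewrite hsum_lt_recl // big_ord1 mul1r IHd.
Qed.

Lemma hsum_lt_deg1 B d (x : 'I_d -> R) : (1 < B)%N ->
  hsum_lt B 1 x = \sum_(j < d) x j.
Proof.
move=> B_gt1; have B_gt0 := ltnW B_gt1.
elim: d x => [|d IHd] x; first by rewrite hsum_lt0 ?big_ord0.
rewrite hsum_lt_recl // !big_ord_recl big_ord0 addr0 mul1r IHd.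
by rewrite hsum_lt_deg0 // mulr1 addrC.
Qed.

Definition hsum2 (u v : R) (n : nat) : R :=
  \sum_(i < n.+1) u ^+ i * v ^+ (n - i).

Lemma hsum2_0 u v : hsum2 u v 0 = 1.
Proof. by rewrite /hsum2 big_ord1 !expr0 mulr1. Qed.

Lemma hsum2S u v n : hsum2 u v n.+1 = v ^+ n.+1 + u * hsum2 u v n.
Proof.
rewrite /hsum2 big_ord_recl expr0 mul1r subn0 mulr_sumr; congr (_ + _).
by apply: eq_bigr => i _; rewrite subSS exprS mulrA.
Qed.

Lemma hsum_lt2 B n (x : 'I_2 -> R) : (n < B)%N ->
  hsum_lt B n x = hsum2 (x ord0) (x (lift ord0 ord0)) n.
Proof.
move=> ltnB; rewrite hsum_lt_recl //; apply: eq_bigr => i _.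
by rewrite hsum_lt1 // (leq_ltn_trans (leq_subr _ _) ltnB).
Qed.

End CompleteHomogeneous.

Section Identities.
Variable R : comNzRingType.

Lemma hsum_lt_deg2 B d (x : 'I_d -> R) : (2 < B)%N ->
  2 * hsum_lt B 2 x = \sum_(j < d) x j ^+ 2 + (\sum_(j < d) x j) ^+ 2.
Proof.
move=> B_gt2; have B_gt1 := ltnW B_gt2; have B_gt0 := ltnW B_gt1.
elim: d x => [|d IHd] x.
  by rewrite hsum_lt0 // !big_ord0 mulr0 expr0n addr0.
rewrite hsum_lt_recl // !big_ord_recl big_ord0 addr0.
rewrite hsum_lt_deg1 // hsum_lt_deg0 //.
rewrite expr0 mul1r subn0 expr1 mulr1 mulrDr IHd.
by rewrite -[x ord0 ^+ lift _ (lift _ _)]/(x ord0 ^+ 2); ring.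
Qed.

Lemma hsum2_even_excess (a b : R) m :
  2 * hsum2 a b m.*2.+2 - a ^+ m.*2.+2 - b ^+ m.*2.+2
  = (a + b) ^+ 2 * hsum2 (a ^+ 2) (b ^+ 2) m.
Proof.
elim: m => [|m IHm]; first by rewrite !hsum2S !hsum2_0; ring.
rewrite doubleS (hsum2S a b m.*2.+3) (hsum2S a b m.*2.+2) (hsum2S (a ^+ 2)).
have sqr_pow : (b ^+ 2) ^+ m.+1 = b ^+ m.*2.+2 by rewrite -exprM mul2n doubleS.
rewrite sqr_pow [RHS]mulrDr (mulrCA ((a + b) ^+ 2) (a ^+ 2)) -IHm !exprS; ring.
Qed.

Lemma hsum_lt3_deg4 B (x : 'I_3 -> R) : (4 < B)%N ->
  2 * hsum_lt B 4 x - \sum_(j < 3) x j ^+ 4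
  = (\sum_(j < 3) x j) ^+ 2 * \sum_(j < 3) x j ^+ 2.
Proof.
move=> B_gt4; rewrite hsum_lt_recl // !big_ord_recl !big_ord0.
rewrite !hsum_lt2 ?(leq_ltn_trans (leq_subr _ _) B_gt4) //=.
by rewrite !hsum2S !hsum2_0; ring.
Qed.

End Identities.

Lemma hsum2_sqr_ge0 (R : realDomainType) (a b : R) m :
  0 <= hsum2 (a ^+ 2) (b ^+ 2) m.
Proof. by apply: sumr_ge0 => i _; rewrite mulr_ge0 // exprn_ge0 // sqr_ge0. Qed.

Theorem proposition3 (R : realType) (d q : nat) :
  (0 < q)%N -> ~~ odd q ->
  (q = 2%N \/ d = 2%N \/ (d = 3%N /\ q = 4%N)) ->
  forall x : 'I_d -> R,
    hq q x >= 2^-1 * \sum_(j < d) x j ^+ q.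
Proof.
move=> q_gt0 q_even [->|[->|[-> ->]]] x; rewrite -[hq _ x]/(hsum_lt _.+1 _ x).
- have := hsum_lt_deg2 x (isT : (2 < 3)%N).
  have := sqr_ge0 (\sum_(j < d) x j); lra.
- have [m ->] : exists m, q = m.*2.+2.
    case: q q_gt0 q_even => [|[|m]] //= _ /negbNE m_even; exists m./2.
    by rewrite -[in LHS](odd_double_half m) (negbTE m_even).
  rewrite hsum_lt2 // !big_ord_recl big_ord0 addr0.
  set a := x ord0; set b := x (lift ord0 ord0).
  have := hsum2_even_excess a b m.
  have := mulr_ge0 (sqr_ge0 (a + b)) (hsum2_sqr_ge0 a b m); lra.
- have := hsum_lt3_deg4 x (isT : (4 < 5)%N).
  have sum_sqr_ge0 : 0 <= \sum_(j < 3) x j ^+ 2.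
    by apply: sumr_ge0 => j _; apply: sqr_ge0.
  have := mulr_ge0 (sqr_ge0 (\sum_(j < 3) x j)) sum_sqr_ge0; lra.
Qed.
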